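(* Let $G=(\mathcal{V},\mathcal{E})$ be a directed graph with start $s_0$, goal region $\mathcal{G}$, true edge costs $c^t$ and lazy edge costs $c^l\le c^t$, and let $c^*$ be the cost (with respect to $c^t$) of an optimal path from $s_0$ to $\mathcal{G}$ in $G$. In any iteration $i$ of MPLP, the path $\pi_i$ computed by the weighted A* search (ComputePath) of that iteration satisfies $\mathrm{cost}(\pi_i)\le \epsilon^h\cdot c^*$, where $\mathrm{cost}(\pi_i)$ is the cost of $\pi_i$ in the intermediate graph $G_i$ used by that search and $\epsilon^h\ge1$ is the heuristic inflation factor.
   Context: Each edge $e$ of $G$ has a true cost $c^t(e)\in[0,\infty]$ computed by an expensive evaluation routine and a cheap lazy cost $c^l(e)\le c^t(e)$. MPLP repeatedly runs a weighted A* search (ComputePath) with an admissible heuristic inflated by a factor $\epsilon^h\ge1$ on an intermediate graph $G_i$: $G_i$ has the same vertices and edges as $G$, with each edge's cost equal to its true cost if the edge has already been evaluated (by evaluation threads running asynchronously in parallel with the search) and equal to its lazy cost otherwise. Weighted A* with inflation $\epsilon^h$ on a graph returns a path whose cost is at most $\epsilon^h$ times the optimal path cost in that graph. *)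

From HB Require Import structures.
From mathcomp Require Import all_boot all_order all_algebra.
From mathcomp Require Import all_classical all_reals ereal.
Set Implicit Arguments. Unset Strict Implicit. Unset Printing Implicit Defensive.
Import Order.TTheory GRing.Theory Num.Theory.
Local Open Scope classical_set_scope.
Local Open Scope ereal_scope.

(* A directed graph: vertices of type V, edge relation E : rel V.
   Edge costs are functions V -> V -> \bar R (only their values on edges matter),
   taking values in [0, +oo]. *)

Definition path_cost (R : realType) (V : Type) (c : V -> V -> \bar R)
    (s : V) (p : seq V) : \bar R :=
  \sum_(xy <- zip (s :: p) p) c xy.1 xy.2.

Definition is_goal_path (V : Type) (E : rel V) (s0 : V) (Goal : set V)
    (p : seq V) : Prop :=
  path E s0 p /\ Goal (last s0 p).

(* Cost of an optimal path from s0 to Goal w.r.t. the cost function c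
   (+oo if no such path exists). *)
Definition opt_cost (R : realType) (V : Type) (E : rel V) (c : V -> V -> \bar R)
    (s0 : V) (Goal : set V) : \bar R :=
  ereal_inf [set path_cost c s0 p | p in is_goal_path E s0 Goal].

(* Edge costs of the intermediate graph G_i: true cost for already
   evaluated edges, lazy cost otherwise. *)
Definition inter_cost (R : realType) (V : Type) (ct cl : V -> V -> \bar R)
    (evaluated : V -> V -> bool) : V -> V -> \bar R :=
  fun u v => if evaluated u v then ct u v else cl u v.

From HB Require Import structures.
From mathcomp Require Import all_boot all_order all_algebra.
From mathcomp Require Import all_classical all_reals ereal.
Import Order.TTheory GRing.Theory Num.Theory.
Local Open Scope classical_set_scope.
Local Open Scope ereal_scope.

(* Lazy costs underestimate true costs, so every edge of G_i is at most as
   expensive as in G; hence every path, and thus the optimal one, is at most as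
   expensive in G_i as in G.  The eps_h-suboptimality of weighted A* on G_i
   then transfers to G. *)

Section CostMonotonicity.

Variables (R : realType) (V : Type).

Lemma inter_cost_le (ct cl : V -> V -> \bar R) (evaluated : V -> V -> bool) :
  (forall u v, cl u v <= ct u v) ->
  forall u v, inter_cost ct cl evaluated u v <= ct u v.
Proof. by move=> cl_le_ct u v; rewrite /inter_cost; case: evaluated. Qed.

Lemma le_path_cost (c1 c2 : V -> V -> \bar R) (s : V) (p : seq V) :
  (forall u v, c1 u v <= c2 u v) -> path_cost c1 s p <= path_cost c2 s p.
Proof. by move=> c1_le_c2; apply: lee_sum => -[u v] _. Qed.

Lemma le_opt_cost (E : rel V) (c1 c2 : V -> V -> \bar R) (s0 : V) (Goal : set V) :
  (forall u v, c1 u v <= c2 u v) -> opt_cost E c1 s0 Goal <= opt_cost E c2 s0 Goal.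
Proof.
move=> c1_le_c2; apply/ereal_infP => _ [p goal_p <-].
apply: ge_ereal_inf; exists (path_cost c1 s0 p); first by exists p.
exact: le_path_cost.
Qed.

End CostMonotonicity.

Theorem lemma1 (R : realType) (V : Type) (E : rel V) (s0 : V) (Goal : set V)
    (ct cl : V -> V -> \bar R) (eps_h : R)
    (evaluated : V -> V -> bool) (pi_i : seq V) :
  (forall u v, 0 <= cl u v) ->
  (forall u v, cl u v <= ct u v) ->
  (1 <= eps_h)%R ->
  (* pi_i is the output of weighted A* with inflation eps_h on G_i *)
  is_goal_path E s0 Goal pi_i ->
  path_cost (inter_cost ct cl evaluated) s0 pi_i
    <= eps_h%:E * opt_cost E (inter_cost ct cl evaluated) s0 Goal ->
  path_cost (inter_cost ct cl evaluated) s0 pi_i <= eps_h%:E * opt_cost E ct s0 Goal.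
Proof.
move=> _ cl_le_ct eps_ge1 _ /le_trans; apply; apply: lee_wpmul2l.
  by rewrite lee_fin (le_trans ler01).
exact/le_opt_cost/inter_cost_le.
Qed.
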